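(* Fix $\alpha\in(0,\pi/4]$, $s>1$ and $\rho>0$, and suppose the execution of MaxHedge with these parameters is valid. If MaxHedge fails, then every deterministic online algorithm has competitive ratio greater than $\rho$.
   Context: A drone at $(t_x,t_y)$, $t_y\ge0$, covers $[t_x-t_y\tan\alpha,t_x+t_y\tan\alpha]$ on the $x$-axis; $\mathrm{FC}(X_0,\dots,X_i)$ denotes the set of positions covering $X_0,\dots,X_i$. For an input $X_0=(0,0),X_1,\dots,X_n$ on the $x$-axis, an online algorithm responds with $P_0=X_0$ and $P_i\in\mathrm{FC}(X_0,\dots,X_i)$ chosen knowing only $X_0,\dots,X_i$; its cost is $\sum_i|P_iP_{i+1}|$; OPT is the minimum cost with the input known in advance; the competitive ratio is the supremum over inputs of cost/OPT. Fix $s>1$ and the requests $X_0=(0,0)$, $X_i=(2(-s)^{i-1},0)$, $i\ge1$. Let $T_i$ be the apex of $\mathrm{FC}(X_0,\dots,X_i)$: $T_0=X_0$, $T_1=(1,\cot\alpha)$, $T_i=((-s)^{i-2}(1-s),s^{i-2}(1+s)\cot\alpha)$ for $i\ge2$, and $o_i=|X_0T_i|$ (the optimal offline cost for $X_0,\dots,X_i$; $o_0=0$). MaxHedge with parameter $\rho$: $Z_0=X_0$; for $i\ge1$, $Z_i=T_i+z_i(T_{i+1}-T_i)$, $z_i\ge0$, is the intersection of the halfline from $T_i$ through $T_{i+1}$ with the circle centred at $Z_{i-1}$ of radius $\rho(o_i-o_{i-1})$; if no such point exists MaxHedge fails in round $i$. The domain is the set of rounds before failure (all rounds if it never fails). The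 execution is valid if for every round $i\ge1$ in the domain, $Z_i$ lies on the same side of the $y$-axis as $T_i$. *)

From HB Require Import structures.
From mathcomp Require Import all_boot all_order all_algebra.
From mathcomp Require Import all_classical all_reals all_analysis.
Set Implicit Arguments. Unset Strict Implicit. Unset Printing Implicit Defensive.
Import Order.TTheory GRing.Theory Num.Theory.
Local Open Scope classical_set_scope.
Local Open Scope ring_scope.

Section Drone.
Variable R : realType.

Definition dist (p q : R * R) : R :=
  Num.sqrt ((p.1 - q.1) ^+ 2 + (p.2 - q.2) ^+ 2).

(* a drone at t (with t.2 >= 0) covers the point (x,0) *)
Definition covers (a : R) (t : R * R) (x : R) : bool :=
  (t.1 - t.2 * tan a <= x) && (x <= t.1 + t.2 * tan a).

(* t in FC(X_0,...,X_i), requests given by their x-coordinates ys *)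
Definition inFC (a : R) (ys : seq R) (t : R * R) : Prop :=
  0 <= t.2 /\ all (covers a t) ys.

(* A deterministic online algorithm: maps the requests seen so far
   (x-coordinates of X_1..X_i) to its position P_i. *)
Definition online_alg (a : R) (A : seq R -> R * R) : Prop :=
  forall xs : seq R, xs != [::] -> inFC a (0 :: xs) (A xs).

Definition alg_pos (A : seq R -> R * R) (xs : seq R) (i : nat) : R * R :=
  if i is 0 then (0, 0) else A (take i xs).

Definition path_cost (n : nat) (P : nat -> R * R) : R :=
  \sum_(i < n) dist (P i) (P i.+1).

Definition alg_cost (A : seq R -> R * R) (xs : seq R) : R :=
  path_cost (size xs) (alg_pos A xs).

Definition offline_feasible (a : R) (xs : seq R) (Q : nat -> R * R) : Prop :=
  Q 0 = (0, 0) /\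
  forall i : nat, (1 <= i <= size xs)%N -> inFC a (0 :: take i xs) (Q i).

Definition OPT (a : R) (xs : seq R) : R :=
  inf [set c | exists Q, offline_feasible a xs Q /\ c = path_cost (size xs) Q].

Definition comp_ratio (a : R) (A : seq R -> R * R) : \bar R :=
  ereal_sup [set ((alg_cost A xs / OPT a xs)%:E) | xs in [set xs | 0 < OPT a xs]].

(* ---- MaxHedge on the input X_i = (2(-s)^(i-1), 0) ---- *)

Definition cot (a : R) : R := (tan a)^-1.

Definition Tpt (a s : R) (i : nat) : R * R :=
  match i with
  | 0 => (0, 0)
  | 1 => (1, cot a)
  | k.+2 => ((- s) ^+ k * (1 - s), s ^+ k * (1 + s) * cot a)
  end.

Definition opt_o (a s : R) (i : nat) : R := dist (0, 0) (Tpt a s i).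

(* candidate parameters z >= 0 of the halfline from T_i through T_(i+1)
   meeting the circle centred at Zp of radius rho (o_i - o_(i-1)) *)
Definition hedge_set (a s rho : R) (i : nat) (Zp : R * R) : set R :=
  [set z | 0 <= z /\
     dist (Zp) ((Tpt a s i).1 + z * ((Tpt a s i.+1).1 - (Tpt a s i).1),
                (Tpt a s i).2 + z * ((Tpt a s i.+1).2 - (Tpt a s i).2))
     = rho * (opt_o a s i - opt_o a s i.-1)].

(* Z_i (None = MaxHedge has failed in round i or earlier); when the halfline
   meets the circle twice, the point farthest along the halfline is taken. *)
Fixpoint maxhedge (a s rho : R) (i : nat) : option (R * R) :=
  match i with
  | 0 => Some (0, 0)
  | k.+1 =>
    match maxhedge a s rho k with
    | None => None
    | Some Zp =>
      if `[< hedge_set a s rho k.+1 Zp !=set0 >] then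
        let z := sup (hedge_set a s rho k.+1 Zp) in
        Some ((Tpt a s k.+1).1 + z * ((Tpt a s k.+2).1 - (Tpt a s k.+1).1),
              (Tpt a s k.+1).2 + z * ((Tpt a s k.+2).2 - (Tpt a s k.+1).2))
      else None
    end
  end.

Definition maxhedge_fails (a s rho : R) : Prop :=
  exists i : nat, maxhedge a s rho i = None.

Definition maxhedge_valid (a s rho : R) : Prop :=
  forall (i : nat) (Z : R * R), (1 <= i)%N -> maxhedge a s rho i = Some Z ->
    0 < Z.1 * (Tpt a s i).1.

End Drone.

From HB Require Import structures.
From mathcomp Require Import all_boot all_order all_algebra.
From mathcomp Require Import all_classical all_reals all_analysis.
From mathcomp Require Import ring lra zify.
Set Implicit Arguments. Unset Strict Implicit. Unset Printing Implicit Defensive.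
Import Order.TTheory GRing.Theory Num.Theory.
Local Open Scope ring_scope.

(* In the coordinates p = x + y tan(alpha), q = y tan(alpha) - x, a drone at
   (x, y) covers exactly [-q, p]; so the positions feasible after X_1..X_t are
   those dominating T_t componentwise, and the Euclidean distance becomes an
   explicit norm [norm_pq] with dual norm [dual_pq].  Let k be the round in
   which MaxHedge fails.  Going backwards from round k we build dual vectors
   phi_t and nonincreasing weights mu_t such that every path P dominating
   T_1..T_k pays sum_t mu_t |P_t - P_(t-1)| > sum_t mu_t rho (o_t - o_(t-1)):
   at round k because the circle around Z_(k-1) misses the halfline, and at
   earlier rounds because |Z_t - Z_(t-1)| = rho (o_t - o_(t-1)) exactly, while
   validity makes the step Z_(t-1) -> Z_t lean towards the newest request,
   which is what allows phi_t to be chosen (almost) tight for it.  Abel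
   summation then contradicts the prefix bounds sum_(i <= j) |P_i - P_(i-1)|
   <= rho o_j, which the path of an online algorithm of ratio at most rho
   satisfies because OPT <= o_j. *)

Section AbelSummation.
Variable R : numDomainType.

Lemma nonincreasing_nat_le (mu : nat -> R) n i j :
  (forall j, (1 <= j < n)%N -> mu j.+1 <= mu j) -> (1 <= i <= j)%N -> (j <= n)%N ->
  mu j <= mu i.
Proof.
move=> mu_dec /andP[i1]; elim: j => [|j IH]; first by rewrite leqn0 => /eqP ->.
rewrite leq_eqVlt => /orP[/eqP <- //| ij] jn.
apply: le_trans (IH ij (ltnW jn)); apply: mu_dec.
by rewrite jn andbT (leq_trans i1 ij).
Qed.

Lemma abel_sum_le n (mu x y : nat -> R) :
  (forall j, (1 <= j < n)%N -> mu j.+1 <= mu j) ->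
  (forall j, (1 <= j <= n)%N -> 0 <= mu j) ->
  (forall j, (1 <= j <= n)%N -> \sum_(1 <= i < j.+1) x i <= \sum_(1 <= i < j.+1) y i) ->
  \sum_(1 <= j < n.+1) mu j * x j <= \sum_(1 <= j < n.+1) mu j * y j.
Proof.
elim: n mu => [|n IH] mu mu_dec mu_ge0 xy; first by rewrite !big_geq.
rewrite -subr_ge0 -sumrB.
set c := mu n.+1.
(* Abel's trick: subtract the smallest weight [c] from all the weights *)
have -> : \sum_(1 <= i < n.+2) (mu i * y i - mu i * x i) =
    \sum_(1 <= i < n.+1) ((mu i - c) * y i - (mu i - c) * x i)
    + c * (\sum_(1 <= i < n.+2) y i - \sum_(1 <= i < n.+2) x i).
  rewrite (big_nat_recr n.+1 1 (fun i => mu i * y i - mu i * x i)) //.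
  rewrite (big_nat_recr n.+1 1 y) // (big_nat_recr n.+1 1 x) //=.
  have -> : \sum_(1 <= i < n.+1) ((mu i - c) * y i - (mu i - c) * x i) =
      \sum_(1 <= i < n.+1) (mu i * y i - mu i * x i) -
      (c * \sum_(1 <= i < n.+1) y i - c * \sum_(1 <= i < n.+1) x i).
    by rewrite !mulr_sumr -!sumrB; apply: eq_bigr => i _; ring.
  by rewrite /c; ring.
apply: addr_ge0.
  rewrite sumrB subr_ge0; apply: IH.
  - by move=> j /andP[j1 jn]; rewrite lerD2r mu_dec // j1 (ltn_trans jn).
  - move=> j /andP[j1 jn]; rewrite subr_ge0.
    by apply: (@nonincreasing_nat_le mu n.+1 j n.+1 mu_dec); rewrite ?j1 ?(leqW jn).
  - by move=> j /andP[j1 jn]; apply: xy; rewrite j1 (leqW jn).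
by apply: mulr_ge0; [apply: mu_ge0 | rewrite subr_ge0 xy]; rewrite //= ?leqnn.
Qed.

End AbelSummation.

Lemma cauchy_schwarz2 (R : rcfType) (x y z w : R) :
  x * z + y * w <= Num.sqrt (x ^+ 2 + y ^+ 2) * Num.sqrt (z ^+ 2 + w ^+ 2).
Proof.
rewrite -sqrtrM ?addr_ge0 ?sqr_ge0 //.
apply: (le_trans (ler_norm _)); rewrite -sqrtr_sqr; apply: ler_wsqrtr.
have -> : (x ^+ 2 + y ^+ 2) * (z ^+ 2 + w ^+ 2) =
    (x * z + y * w) ^+ 2 + (x * w - y * z) ^+ 2 by ring.
by rewrite lerDl sqr_ge0.
Qed.

Section PQNorm.
Variable R : rcfType.
Variable tau : R.
Hypothesis tau_gt0 : 0 < tau.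
Hypothesis sqr_tau_le1 : tau ^+ 2 <= 1.

Let tau_neq0 : tau != 0. Proof. by rewrite gt_eqF. Qed.
Let sqr_tau_gt0 : 0 < tau ^+ 2. Proof. by rewrite exprn_gt0. Qed.
Let one_plus_gt0 : 0 < 1 + tau ^+ 2. Proof. by rewrite ltr_wpDr // ltW. Qed.
Let one_minus_ge0 : 0 <= 1 - tau ^+ 2. Proof. by rewrite subr_ge0. Qed.

(* [norm_pq] is the Euclidean norm in the coordinates p = x + tau y,
   q = tau y - x, and [dual_pq] its dual norm with respect to [dot]. *)
Definition norm_pq (u : R * R) : R :=
  Num.sqrt (((u.1 - u.2) / 2) ^+ 2 + ((u.1 + u.2) / (2 * tau)) ^+ 2).

Definition dual_pq (f : R * R) : R :=
  Num.sqrt ((f.1 - f.2) ^+ 2 + (tau * (f.1 + f.2)) ^+ 2).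

Definition dot (f u : R * R) : R := f.1 * u.1 + f.2 * u.2.

Lemma norm_pq_ge0 u : 0 <= norm_pq u. Proof. exact: sqrtr_ge0. Qed.

Lemma dual_pq_ge0 f : 0 <= dual_pq f. Proof. exact: sqrtr_ge0. Qed.

Lemma dot_le_dual_norm f u : dot f u <= dual_pq f * norm_pq u.
Proof.
have -> : dot f u = (f.1 - f.2) * ((u.1 - u.2) / 2)
                    + tau * (f.1 + f.2) * ((u.1 + u.2) / (2 * tau)).
  by rewrite /dot; field.
exact: cauchy_schwarz2.
Qed.

(* The requests alternate sides: [newc t] is the coordinate on the side of
   X_t, [oldc t] the one on the side of X_(t-1). *)
Definition newc (t : nat) (u : R * R) : R := if odd t then u.1 else u.2.
Definition oldc (t : nat) (u : R * R) : R := if odd t then u.2 else u.1.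
Definition orient (t : nat) (x y : R) : R * R := if odd t then (x, y) else (y, x).

Lemma newcS t u : newc t.+1 u = oldc t u.
Proof. by rewrite /newc /oldc /=; case: odd. Qed.

Lemma oldcS t u : oldc t.+1 u = newc t u.
Proof. by rewrite /newc /oldc /=; case: odd. Qed.

Lemma newcB t u v : newc t (u - v) = newc t u - newc t v.
Proof. by rewrite /newc; case: odd. Qed.

Lemma oldcB t u v : oldc t (u - v) = oldc t u - oldc t v.
Proof. by rewrite /oldc; case: odd. Qed.

Lemma newc_orient t x y : newc t (orient t x y) = x.
Proof. by rewrite /newc /orient; case: odd. Qed.

Lemma oldc_orient t x y : oldc t (orient t x y) = y.
Proof. by rewrite /oldc /orient; case: odd. Qed.

Lemma norm_pq_oriented t u : norm_pq u = norm_pq (newc t u, oldc t u).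
Proof.
rewrite /newc /oldc; case: odd; first by case: u.
rewrite /norm_pq /=; congr Num.sqrt; congr (_ + _); last by rewrite addrC.
by rewrite -sqrrN -mulNr opprB.
Qed.

Lemma dual_pq_oriented t f : dual_pq f = dual_pq (newc t f, oldc t f).
Proof.
rewrite /newc /oldc; case: odd; first by case: f.
rewrite /dual_pq /=; congr Num.sqrt; congr (_ + _); last by rewrite addrC.
by rewrite -sqrrN opprB.
Qed.

Lemma dot_oriented t f u : dot f u = newc t f * newc t u + oldc t f * oldc t u.
Proof. by rewrite /dot /newc /oldc; case: odd => //; rewrite addrC. Qed.

(* Dual vectors of this shape keep [dual_pq] monotone in their first
   coordinate (see [dual_pq_le_addl]). *)
Definition balanced (x y : R) :=
  [/\ y <= x, (1 - tau ^+ 2) * x <= (1 + tau ^+ 2) * y & 0 < x].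

Lemma dual_pq_gt0 x y : balanced x y -> 0 < dual_pq (x, y).
Proof.
case=> _ bal x_gt0; rewrite sqrtr_gt0 ltr_wpDl ?sqr_ge0 //= exprn_gt0 // mulr_gt0 //.
have : 0 <= (1 + tau ^+ 2) * y by apply: le_trans _ bal; exact: mulr_ge0 _ (ltW x_gt0).
by rewrite pmulr_rge0 // => y_ge0; rewrite ltr_wpDr.
Qed.

Lemma dual_pq_le_addl f g l : 0 <= l -> (1 - tau ^+ 2) * g <= (1 + tau ^+ 2) * f ->
  dual_pq (f, g) <= dual_pq (f + l, g).
Proof.
move=> l_ge0 fg; apply: ler_wsqrtr; rewrite /= -subr_ge0.
have -> : (f + l - g) ^+ 2 + (tau * (f + l + g)) ^+ 2 - ((f - g) ^+ 2 + (tau * (f + g)) ^+ 2)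
    = l * (2 * ((1 + tau ^+ 2) * f - (1 - tau ^+ 2) * g) + l * (1 + tau ^+ 2)) by ring.
apply: mulr_ge0 l_ge0 (addr_ge0 _ (mulr_ge0 l_ge0 (ltW one_plus_gt0))).
by apply: mulr_ge0 => //; rewrite subr_ge0.
Qed.

(* the dual direction in which [dot_le_dual_norm] is an equality *)
Definition dual_dir (d : R * R) : R * R :=
  ((1 + tau ^+ 2) * d.1 + (1 - tau ^+ 2) * d.2,
   (1 + tau ^+ 2) * d.2 + (1 - tau ^+ 2) * d.1).

Lemma dual_dir_tight k d : 0 <= k ->
  k * (dual_dir d).1 * d.1 + k * (dual_dir d).2 * d.2
  = dual_pq (k * (dual_dir d).1, k * (dual_dir d).2) * norm_pq d.
Proof.
move=> k_ge0; case: d => d1 d2; rewrite /dual_dir /dual_pq /norm_pq /=.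
set c := 4 * k * tau ^+ 2.
set N := ((d1 - d2) / 2) ^+ 2 + ((d1 + d2) / (2 * tau)) ^+ 2.
have N_ge0 : 0 <= N by rewrite addr_ge0 // sqr_ge0.
have c_ge0 : 0 <= c by rewrite mulr_ge0 ?mulr_ge0 // ltW.
rewrite [X in Num.sqrt X](_ : _ = c ^+ 2 * N); last by rewrite /c /N; field.
rewrite sqrtrM ?sqr_ge0 // sqrtr_sqr ger0_norm //.
by rewrite -[RHS]mulrA -expr2 sqr_sqrtr // /c /N; field.
Qed.

Lemma dual_dir_balanced d1 d2 : 0 <= d2 < d1 ->
  0 <= (dual_dir (d1, d2)).2 /\ balanced (dual_dir (d1, d2)).1 (dual_dir (d1, d2)).2.
Proof.
case/andP=> d2_ge0 d21; have d1_gt0 : 0 < d1 by apply: le_lt_trans d21.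
rewrite /balanced /dual_dir /=.
have T_gt0 := sqr_tau_gt0; have T_le1 := sqr_tau_le1.
move: (tau ^+ 2) T_gt0 T_le1 => T T_gt0 T_le1.
have Td2 : 0 <= T * d2 by rewrite mulr_ge0 // ltW.
by split; last split; nra.
Qed.

Lemma dual_step_tight f g d1 d2 : f <= g -> 0 < g -> 0 <= d2 < d1 ->
  0 < (dual_dir (d1, d2)).2 ->
  exists2 x, f <= x & balanced x g /\ dual_pq (x, g) * norm_pq (d1, d2) = x * d1 + g * d2.
Proof.
move=> fg g_gt0 d12 m2_gt0; have [_ [m21 bal m1_gt0]] := dual_dir_balanced d12.
set m1 := (dual_dir _).1 in m21 bal m1_gt0 *; set m2 := (dual_dir _).2 in m2_gt0 m21 bal *.
set k := g / m2.
have k_gt0 : 0 < k by rewrite divr_gt0.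
have km2 : k * m2 = g by rewrite /k mulfVK // gt_eqF.
have g_le : g <= k * m1 by rewrite -km2 ler_wpM2l // ltW.
exists (k * m1); first exact: le_trans g_le.
split; last by rewrite -km2 (dual_dir_tight (d1, d2) (ltW k_gt0)).
split=> //; last by rewrite mulr_gt0.
by rewrite -km2 mulrCA [X in _ <= X]mulrCA (ler_wpM2l (ltW k_gt0)).
Qed.

(* For tau = 1 and d2 = 0 no balanced [(x, g)] attains the Cauchy-Schwarz
   bound, but a large enough x comes within eps of it. *)
Lemma dual_step_near_tight_degenerate f g d1 eps : tau ^+ 2 = 1 -> 0 < g -> 0 < d1 -> 0 < eps ->
  exists2 x, f <= x & balanced x g /\ dual_pq (x, g) * norm_pq (d1, 0) - eps <= x * d1.
Proof.
move=> tau1 g_gt0 d1_gt0 eps_gt0.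
set q := d1 * g ^+ 2 / eps.
have q_ge0 : 0 <= q by rewrite divr_ge0 ?mulr_ge0 ?sqr_ge0 ?ltW.
set x := `|f| + g + q + 1.
have f_abs := ler_norm f; have abs_ge0 := normr_ge0 f.
exists x; first by rewrite /x; lra.
split; first by split; rewrite ?tau1 /x; lra.
have x_ge0 : 0 <= x by rewrite /x; lra.
have xe : d1 * g ^+ 2 <= x * eps by rewrite -ler_pdivrMr // -/q /x; lra.
rewrite lerBlDr /dual_pq /norm_pq /= -sqrtrM ?addr_ge0 ?sqr_ge0 //.
have rhs_ge0 : 0 <= x * d1 + eps by rewrite addr_ge0 ?mulr_ge0 // ltW.
rewrite -(ger0_norm rhs_ge0) -sqrtr_sqr; apply: ler_wsqrtr.
rewrite [X in X <= _](_ : _ = (x ^+ 2 + g ^+ 2) * d1 ^+ 2); last first.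
  rewrite subr0 addr0 [(tau * _) ^+ 2]exprMn tau1 mul1r.
  rewrite [(d1 / (2 * tau)) ^+ 2]expr_div_n [(2 * tau) ^+ 2]exprMn tau1 mulr1 -expr_div_n.
  by field.
nra.
Qed.

Lemma dual_step_near_tight f g d1 d2 eps : f <= g -> 0 < g -> 0 <= d2 < d1 -> 0 < eps ->
  exists2 x, f <= x &
    balanced x g /\ dual_pq (x, g) * norm_pq (d1, d2) - eps <= x * d1 + g * d2.
Proof.
move=> fg g_gt0 d12 eps_gt0.
have [m2_gt0 | m2_le0] := ltrP 0 (dual_dir (d1, d2)).2.
  have [x fx [bal tight]] := dual_step_tight fg g_gt0 d12 m2_gt0.
  by exists x => //; split => //; rewrite tight lerBlDr lerDl ltW.
have [d2_ge0 d21] := andP d12; have d1_gt0 : 0 < d1 by apply: le_lt_trans d21.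
have d2_0 : d2 = 0.
  apply/le_anti; rewrite d2_ge0 andbT -(pmulr_rle0 _ one_plus_gt0).
  by apply: le_trans m2_le0; rewrite /= lerDl (mulr_ge0 one_minus_ge0 (ltW d1_gt0)).
have tau1 : tau ^+ 2 = 1.
  apply/le_anti; rewrite sqr_tau_le1 /= -subr_le0 -(pmulr_lle0 _ d1_gt0).
  by apply: le_trans m2_le0; rewrite /= lerDr d2_0 mulr0.
have [x fx [bal tight]] := dual_step_near_tight_degenerate f tau1 g_gt0 d1_gt0 eps_gt0.
by exists x => //; rewrite d2_0 mulr0 addr0.
Qed.

Lemma norm_pq_ltr w u1 u2 : 0 <= w -> 0 <= u1 -> u1 < u2 ->
  norm_pq (w, u1) < norm_pq (w, u2).
Proof.
move=> w_ge0 u1_ge0 u12; rewrite /norm_pq /= ltr_sqrt; last first.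
  by rewrite ltr_wpDl ?sqr_ge0 // exprn_gt0 // divr_gt0 ?mulr_gt0 //; lra.
rewrite -subr_gt0.
have -> : ((w - u2) / 2) ^+ 2 + ((w + u2) / (2 * tau)) ^+ 2
          - (((w - u1) / 2) ^+ 2 + ((w + u1) / (2 * tau)) ^+ 2)
    = (u2 - u1) * ((u1 + u2) * (1 + tau ^- 2) + 2 * w * (tau ^- 2 - 1)) / 4 by field.
have tauV : 1 <= tau ^- 2 by rewrite -[1]invr1 lef_pV2 ?qualifE //= ?exprn_gt0.
rewrite divr_gt0 // mulr_gt0 ?subr_gt0 // ltr_pwDl ?mulr_ge0 ?subr_ge0 //.
by rewrite mulr_gt0 //; lra.
Qed.

Lemma norm_pq_inj w u1 u2 : 0 <= w -> 0 <= u1 -> 0 <= u2 ->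
  norm_pq (w, u1) = norm_pq (w, u2) -> u1 = u2.
Proof.
move=> w_ge0 u1_ge0 u2_ge0 eq12; case: (ltgtP u1 u2) => // lt12.
  by have := norm_pq_ltr w_ge0 u1_ge0 lt12; rewrite eq12 ltxx.
by have := norm_pq_ltr w_ge0 u2_ge0 lt12; rewrite eq12 ltxx.
Qed.

Lemma norm_pq_onto w r : 0 <= w -> norm_pq (w, 0) <= r ->
  exists2 u, 0 <= u & norm_pq (w, u) = r.
Proof.
move=> w_ge0 r_ge; have r_ge0 : 0 <= r := le_trans (norm_pq_ge0 _) r_ge.
(* norm_pq (w, u) = r is the quadratic equation a2 u^2 + 2 b u + c = 0 *)
set a2 := 1 + tau ^+ 2; set b := (1 - tau ^+ 2) * w.
set c := (1 + tau ^+ 2) * w ^+ 2 - 4 * tau ^+ 2 * r ^+ 2.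
have a2_gt0 : 0 < a2 by [].
have b_ge0 : 0 <= b by rewrite mulr_ge0.
have c_le0 : c <= 0.
  move: r_ge; rewrite /norm_pq /= subr0 addr0 -(ger0_norm r_ge0) -sqrtr_sqr.
  rewrite ler_sqrt ?sqr_ge0 // -subr_le0 => le_r.
  have -> : c = 4 * tau ^+ 2 * ((w / 2) ^+ 2 + (w / (2 * tau)) ^+ 2 - r ^+ 2).
    by rewrite /c; field.
  by rewrite pmulr_rle0 // mulr_gt0.
set D := b ^+ 2 - a2 * c.
have D_ge : b ^+ 2 <= D by rewrite /D lerDl oppr_ge0 pmulr_rle0.
have D_ge0 : 0 <= D := le_trans (sqr_ge0 _) D_ge.
set u := (- b + Num.sqrt D) / a2.
have b_le : b <= Num.sqrt D by rewrite -(ger0_norm b_ge0) -sqrtr_sqr ler_wsqrtr.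
exists u; first by apply: divr_ge0; [rewrite addrC subr_ge0 | exact: ltW].
have root : a2 * u ^+ 2 + 2 * b * u + c = 0.
  have -> : a2 * u ^+ 2 + 2 * b * u + c = (Num.sqrt D ^+ 2 - D) / a2.
    by rewrite /u /D; field; rewrite gt_eqF.
  by rewrite sqr_sqrtr // subrr mul0r.
rewrite /norm_pq /= -[r]ger0_norm // -sqrtr_sqr; congr Num.sqrt; apply/eqP.
rewrite -subr_eq0 (_ : _ - _ = (a2 * u ^+ 2 + 2 * b * u + c) / (4 * tau ^+ 2)).
  by rewrite root mul0r.
by rewrite /a2 /b /c; field.
Qed.

Definition below (u v : R * R) := u.1 <= v.1 /\ u.2 <= v.2.

Lemma below_oriented t u v : below u v -> newc t u <= newc t v /\ oldc t u <= oldc t v.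
Proof. by rewrite /newc /oldc => -[]; case: odd. Qed.

Section Certificate.
(* In the application, [Th t] and [Y t] are T_t and Z_t in (p,q)-coordinates,
   except that [Y k] = T_k for the round k in which MaxHedge fails, and
   [r t] = rho (o_t - o_(t-1)). *)
Variables (k : nat) (Th Y : nat -> R * R) (r : nat -> R).
Hypothesis k_gt0 : (0 < k)%N.
Hypothesis Y0 : Y 0%N = (0, 0).
Hypothesis Y_newc : forall t, (0 < t <= k)%N -> newc t (Y t) = newc t (Th t).
Hypothesis Y_oldc : forall t, (0 < t <= k)%N -> oldc t (Th t) <= oldc t (Y t) < newc t (Th t).
Hypothesis Yk : Y k = Th k.
Hypothesis Th_newcS : forall t, (0 < t)%N -> newc t (Th t.+1) = newc t (Th t).
Hypothesis Th1_oldc : oldc 1 (Th 1%N) = 0.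
Hypothesis Y_step : forall t, (0 < t < k)%N -> norm_pq (Y t - Y t.-1) = r t.
Hypothesis Y_fail : r k < norm_pq (Y k - Y k.-1).

Lemma Y_pred t : (0 < t <= k)%N ->
  oldc t (Y t.-1) = oldc t (Th t) /\ newc t (Y t.-1) <= oldc t (Th t).
Proof.
case: t => [//|[|t]] tk; first by rewrite /= Y0 Th1_oldc /oldc /newc.
have t1k : (0 < t.+1 <= k)%N by rewrite /= ltnW.
rewrite /= [oldc t.+2 _]oldcS [newc t.+2 _]newcS Y_newc //.
rewrite [oldc t.+2 (Th _)]oldcS Th_newcS //; split => //.
by case/andP: (Y_oldc t1k) => _ /ltW.
Qed.

Lemma Y_step_leans t : (0 < t <= k)%N ->
  0 <= oldc t (Y t - Y t.-1) < newc t (Y t - Y t.-1).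
Proof.
move=> tk; have [old_pred new_pred] := Y_pred tk; have /andP[Th_le Y_lt] := Y_oldc tk.
rewrite newcB oldcB Y_newc // old_pred subr_ge0 Th_le /=; lra.
Qed.

(* A dual certificate for the rounds t..k: with weights [mu], every path
   dominating T_t..T_k pays at least the budget [r], plus the slack [G] > 0,
   plus what it saves by starting at P_(t-1) instead of Y_(t-1). *)
Definition certificate t := exists (phi : R * R) (mu : nat -> R) (G : R),
  [/\ 0 < G, balanced (newc t phi) (oldc t phi), mu t = dual_pq phi,
      (forall j, (t <= j < k)%N -> mu j.+1 <= mu j) /\ (forall j, (t <= j <= k)%N -> 0 <= mu j) &
      forall P : nat -> R * R, (forall j, (t <= j <= k)%N -> below (Th j) (P j)) ->
        dot phi (Y t.-1 - P t.-1) + \sum_(t <= j < k.+1) mu j * r j + G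
        <= \sum_(t <= j < k.+1) mu j * norm_pq (P j - P j.-1)].

Lemma certificate_last : certificate k.
Proof.
set D := Y k - Y k.-1.
have leans : 0 <= oldc k D < newc k D by apply: Y_step_leans; rewrite k_gt0 /=.
have [m2_ge0 bal] := dual_dir_balanced leans.
set d := (newc k D, oldc k D) in m2_ge0 bal *.
set phi := orient k (dual_dir d).1 (dual_dir d).2.
have dual_gt0 : 0 < dual_pq phi.
  by rewrite (dual_pq_oriented k) newc_orient oldc_orient; apply: dual_pq_gt0.
exists phi, (fun _ => dual_pq phi), (dual_pq phi * (norm_pq D - r k)).
split; rewrite ?newc_orient ?oldc_orient //.
- by rewrite mulr_gt0 // subr_gt0.
- split=> [j /andP[kj jk] | j _]; last exact: ltW.
  by move: (leq_ltn_trans kj jk); rewrite ltnn.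
move=> P P_above; rewrite !big_nat1.
have /(below_oriented k) [Pk_new Pk_old] : below (Th k) (P k) by apply: P_above; rewrite leqnn.
have tight : dot phi D = dual_pq phi * norm_pq D.
  rewrite (dot_oriented k) (dual_pq_oriented k) (norm_pq_oriented k D) -/d.
  by rewrite newc_orient oldc_orient; have := dual_dir_tight d ler01; rewrite !mul1r.
have gain : 0 <= dot phi (P k - Y k).
  rewrite (dot_oriented k) newc_orient oldc_orient newcB oldcB Yk.
  case: bal => _ _ /ltW m1_ge0.
  by rewrite addr_ge0 // mulr_ge0 // subr_ge0.
have split_path : dot phi (P k - P k.-1) =
    dot phi (Y k.-1 - P k.-1) + dot phi D + dot phi (P k - Y k).
  by rewrite /dot /D /=; ring.
have := dot_le_dual_norm phi (P k - P k.-1); lra.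
Qed.

Lemma certificate_step t : (0 < t < k)%N -> certificate t.+1 -> certificate t.
Proof.
move=> /andP[t_gt0 tk] [phi' [mu' [G' [G'_gt0 bal' mu't [mu'_dec mu'_ge0] cert']]]].
have tk' : (0 < t <= k)%N by rewrite t_gt0 ltnW.
set D := Y t - Y t.-1.
move: bal'; rewrite newcS oldcS => -[fg bal' g_gt0].
have [x fx [bal near_tight]] :=
  dual_step_near_tight fg g_gt0 (Y_step_leans tk') (divr_gt0 G'_gt0 (ltr0Sn _ 1)).
set phi := orient t x (oldc t phi').
have [phi_new phi_old] : newc t phi = x /\ oldc t phi = oldc t phi'.
  by rewrite newc_orient oldc_orient.
have dual_le : dual_pq phi' <= dual_pq phi.
  rewrite (dual_pq_oriented t) (dual_pq_oriented t phi) phi_new phi_old.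
  by rewrite -[x](subrKC (newc t phi')) dual_pq_le_addl ?subr_ge0.
exists phi, (fun j => if j == t then dual_pq phi else mu' j), (G' / 2).
split; rewrite ?phi_new ?phi_old ?eqxx ?divr_gt0 //.
  split=> j /andP[tj jk].
    have [->|jt] := eqVneq j t; first by rewrite gtn_eqF ?mu't.
    have tj' : (t < j)%N by rewrite ltn_neqAle eq_sym jt tj.
    rewrite gtn_eqF; last by rewrite ltnS ltnW.
    by apply: mu'_dec; rewrite tj' jk.
  case: eqP => [_|/eqP jt]; first exact: dual_pq_ge0.
  by apply: mu'_ge0; rewrite jk andbT ltn_neqAle eq_sym jt tj.
move=> P P_above.
have P_above' : forall j, (t < j <= k)%N -> below (Th j) (P j).
  by move=> j /andP[tj jk]; apply: P_above; rewrite jk andbT ltnW.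
have /= cert_P := cert' P P_above'.
rewrite big_ltn ?ltnS ?(ltnW tk) // [X in _ <= X]big_ltn ?ltnS ?(ltnW tk) // eqxx.
under eq_big_nat => i /andP[ti _] do rewrite (gtn_eqF ti).
under [X in _ <= _ + X]eq_big_nat => i /andP[ti _] do rewrite (gtn_eqF ti).
have /(below_oriented t) [Pt_new _] : below (Th t) (P t) by apply: P_above; rewrite leqnn ltnW.
have gain : 0 <= (x - newc t phi') * (newc t (P t) - newc t (Y t)).
  by rewrite mulr_ge0 ?subr_ge0 ?Y_newc.
have split_path : dot phi (P t - P t.-1) + dot phi' (Y t - P t) =
    dot phi (Y t.-1 - P t.-1) + dot phi D + (x - newc t phi') * (newc t (P t) - newc t (Y t)).
  by rewrite !(dot_oriented t) phi_new phi_old !newcB !oldcB; ring.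
have tight : dual_pq phi * r t - G' / 2 <= dot phi D.
  rewrite (dot_oriented t) (dual_pq_oriented t) -Y_step 1?(norm_pq_oriented t) ?t_gt0 //.
  by rewrite phi_new phi_old.
have := dot_le_dual_norm phi (P t - P t.-1); lra.
Qed.

Lemma certificate_first : certificate 1.
Proof.
suff cert_from n : (n < k)%N -> certificate (k - n).
  by have := cert_from k.-1; rewrite ltn_predL k_gt0 -subn1 subKn // => /(_ isT).
elim: n => [|n IH] nk; first by rewrite subn0; exact: certificate_last.
have kn : (k - n = (k - n.+1).+1)%N by rewrite subnS prednK // subn_gt0 ltnW.
apply: certificate_step; last by rewrite -kn; apply: IH; exact: ltnW.
by rewrite subn_gt0 nk /= ltn_subrL k_gt0.
Qed.

Lemma no_path_within_budget (P : nat -> R * R) : P 0%N = (0, 0) ->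
  (forall j, (0 < j <= k)%N -> below (Th j) (P j)) ->
  ~ (forall j, (0 < j <= k)%N ->
       \sum_(1 <= i < j.+1) norm_pq (P i - P i.-1) <= \sum_(1 <= i < j.+1) r i).
Proof.
move=> P0 P_above within_budget.
have [phi [mu [G [G_gt0 _ _ [mu_dec mu_ge0] cert]]]] := certificate_first.
have := abel_sum_le mu_dec mu_ge0 within_budget.
have := cert P P_above; rewrite /= Y0 P0 subrr /dot /= !mulr0 addr0 add0r; lra.
Qed.

End Certificate.
End PQNorm.

Section Drone.
Variable R : realType.
Variables a s rho : R.
Hypothesis a_gt0 : 0 < a.
Hypothesis a_le_pi4 : a <= pi / 4.
Hypothesis s_gt1 : 1 < s.

Local Notation tau := (tan a).

Let pi4_ge0 : 0 <= pi / 4 :> R.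
Proof. by rewrite divr_ge0 // ltW // (pi_gt0 R). Qed.

Lemma tan_domain (x : R) : 0 <= x <= pi / 4 -> x \in `]- (pi / 2), pi / 2[.
Proof.
have pi_gt0 : 0 < pi :> R := pi_gt0 R.
have pi4_lt : pi / 4 < pi / 2 :> R by rewrite ltr_pM2l // ltf_pV2 ?qualifE //= ?ltr_nat.
case/andP=> x_ge0 x_le; rewrite in_itv /= (lt_le_trans _ x_ge0) ?oppr_lt0 ?divr_gt0 //=.
exact: le_lt_trans pi4_lt.
Qed.

Lemma tau_gt0 : 0 < tau.
Proof. by rewrite -(tan0 R) ltr_tan ?tan_domain ?lexx ?pi4_ge0 ?(ltW a_gt0). Qed.

Lemma sqr_tau_le1 : tau ^+ 2 <= 1.
Proof.
have tau_le1 : tau <= 1.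
  move: a_le_pi4; rewrite le_eqVlt => /orP[/eqP -> | lt_a]; first by rewrite tan_piquarter.
  by rewrite -tan_piquarter ltW // ltr_tan // tan_domain ?lexx ?pi4_ge0 ?(ltW a_gt0) ?ltW.
by rewrite expr_le1 // ltW // tau_gt0.
Qed.

Lemma tau_cot : tau * cot a = 1.
Proof. by rewrite /cot mulfV // gt_eqF // tau_gt0. Qed.

Definition pq (P : R * R) : R * R := (P.1 + tau * P.2, tau * P.2 - P.1).

Lemma covers_pq y P : covers a P y = (- (pq P).2 <= y <= (pq P).1).
Proof. by rewrite /covers /pq /= opprB [P.2 * _]mulrC. Qed.

Lemma pq0 : pq (0, 0) = (0, 0).
Proof. by rewrite /pq /= mulr0 addr0 subr0. Qed.

Lemma dist_pq P Q : dist P Q = norm_pq tau (pq P - pq Q).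
Proof.
rewrite /dist /norm_pq /pq /=; congr Num.sqrt.
by field; rewrite gt_eqF // tau_gt0.
Qed.

Lemma distC (P Q : R * R) : dist P Q = dist Q P.
Proof. by rewrite /dist -sqrrN opprB -[(P.2 - Q.2) ^+ 2]sqrrN opprB. Qed.

Lemma dist_ge0 (P Q : R * R) : 0 <= dist P Q. Proof. exact: sqrtr_ge0. Qed.

Lemma dist_xx (P : R * R) : dist P P = 0.
Proof. by rewrite /dist !subrr expr0n addr0 sqrtr0. Qed.

Lemma s_gt0 : 0 < s. Proof. exact: lt_trans s_gt1. Qed.

Lemma expr_s_gt0 n : 0 < s ^+ n. Proof. by rewrite exprn_gt0 // s_gt0. Qed.

Lemma expr_s_ltS n : s ^+ n < s ^+ n.+1. Proof. by rewrite ltr_eXn2l. Qed.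

Definition Tpq (t : nat) : R * R := pq (Tpt a s t).

Lemma Tpq0 : Tpq 0 = (0, 0). Proof. exact: pq0. Qed.

Lemma Tpq1 : Tpq 1 = (2, 0). Proof. by rewrite /Tpq /pq /= tau_cot subrr. Qed.

Lemma TpqSS n : Tpq n.+2 = orient n.+2 (2 * s ^+ n.+1) (2 * s ^+ n).
Proof.
rewrite /Tpq /pq /orient /= [tau * _]mulrCA tau_cot mulr1 exprNn -signr_odd exprS.
by case: odd; rewrite ?expr1 ?expr0; congr pair; ring.
Qed.

Lemma newc_Tpq t : (0 < t)%N -> newc t (Tpq t) = 2 * s ^+ t.-1.
Proof.
case: t => [//|[|n]] _; first by rewrite Tpq1 /newc /= expr0 mulr1.
by rewrite TpqSS newc_orient.
Qed.

Lemma oldc_Tpq t : (1 < t)%N -> oldc t (Tpq t) = 2 * s ^+ t.-2.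
Proof. by case: t => [//|[//|n]] _; rewrite TpqSS oldc_orient. Qed.

Lemma oldc_Tpq1 : oldc 1 (Tpq 1) = 0. Proof. by rewrite Tpq1. Qed.

Lemma newc_TpqS t : (0 < t)%N -> newc t (Tpq t.+1) = newc t (Tpq t).
Proof. by move=> t_gt0; rewrite -oldcS oldc_Tpq ?newc_Tpq. Qed.

Lemma oldc_lt_newc_Tpq t : (0 < t)%N -> oldc t (Tpq t) < newc t (Tpq t).
Proof.
case: t => [//|[|n]] _; first by rewrite Tpq1 /oldc /newc /= ltr0n.
by rewrite oldc_Tpq // newc_Tpq // ltr_pM2l // expr_s_ltS.
Qed.

Lemma oldc_Tpq_ge0 t : 0 <= oldc t (Tpq t).
Proof.
case: t => [|[|n]]; first by rewrite Tpq0 /oldc; case: odd.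
  by rewrite oldc_Tpq1.
by rewrite oldc_Tpq // mulr_ge0 // ltW // expr_s_gt0.
Qed.

Lemma oldc_Tpq_ltS t : (0 < t)%N -> oldc t (Tpq t) < oldc t (Tpq t.+1).
Proof.
move=> t_gt0; rewrite -[oldc t (Tpq t.+1)]newcS newc_Tpq //.
apply: lt_trans (oldc_lt_newc_Tpq t_gt0) _.
by rewrite newc_Tpq // ltr_pM2l //; case: t t_gt0 => // t _; apply: expr_s_ltS.
Qed.

Lemma Tpq_ge0 t : 0 <= (Tpq t).1 /\ 0 <= (Tpq t).2.
Proof.
case: t => [|t]; first by rewrite Tpq0.
have old_ge0 := oldc_Tpq_ge0 t.+1; have /ltW old_le := oldc_lt_newc_Tpq (ltn0Sn t).
move: old_ge0 old_le; rewrite /newc /oldc.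
by case: odd => h0 h1; split=> //; apply: le_trans h0 h1.
Qed.

Definition req (j : nat) : R := 2 * (- s) ^+ j.-1.

Definition reqs (n : nat) : seq R := map req (iota 1 n).

Lemma size_reqs n : size (reqs n) = n.
Proof. by rewrite size_map size_iota. Qed.

Lemma take_reqs i j : (i <= j)%N -> take i (reqs j) = reqs i.
Proof. by move=> ij; rewrite /reqs -map_take take_iota (minn_idPl ij). Qed.

Lemma mem_reqs j n : (0 < j <= n)%N -> req j \in reqs n.
Proof. by move=> jn; rewrite map_f // mem_iota add1n ltnS. Qed.

Lemma norm_req j : `|req j| = 2 * s ^+ j.-1.
Proof. by rewrite normrM normrX normrN !gtr0_norm // s_gt0. Qed.

Lemma reqS n : req n.+1 = if odd n then - (2 * s ^+ n) else 2 * s ^+ n.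
Proof. by rewrite /req /= exprNn -signr_odd; case: odd; rewrite ?expr1 ?expr0; ring. Qed.

Lemma Tpq_extreme_reqs t : (0 < t)%N ->
  (Tpq t).1 \in 0 :: reqs t /\ - (Tpq t).2 \in 0 :: reqs t.
Proof.
case: t => [//|[|n]] _.
  by rewrite Tpq1 /= oppr0 /reqs /= /req /= expr0 mulr1 !inE !eqxx orbT.
have mem_n1 : req n.+1 \in 0 :: reqs n.+2 by rewrite inE mem_reqs ?orbT //= ltnW.
have mem_n2 : req n.+2 \in 0 :: reqs n.+2 by rewrite inE mem_reqs ?orbT //= leqnn.
move: mem_n1 mem_n2; rewrite TpqSS /orient !reqS /=.
by case: odd => /= m1 m2; split; rewrite ?opprK.
Qed.

Lemma req_extreme t : (0 < t)%N -> req t = (Tpq t).1 \/ req t = - (Tpq t).2.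
Proof.
case: t => [//|[|n]] _; first by left; rewrite Tpq1 /req /= expr0 mulr1.
by rewrite reqS TpqSS /orient /=; case: odd; [left | right].
Qed.

Lemma Tpq_ge_oldc t : (1 < t)%N -> 2 * s ^+ t.-2 <= (Tpq t).1 /\ 2 * s ^+ t.-2 <= (Tpq t).2.
Proof.
move=> t_gt1; have := oldc_lt_newc_Tpq (ltnW t_gt1); have := oldc_Tpq t_gt1.
by rewrite /oldc /newc; case: odd => -> /ltW.
Qed.

Lemma Tpq_covers t j : (0 < j <= t)%N -> - (Tpq t).2 <= req j <= (Tpq t).1.
Proof.
case/andP=> j_gt0 jt; have [T1_ge0 T2_ge0] := Tpq_ge0 t.
have [jt_eq | jt'] := eqVneq j t.
  by subst j; case: (req_extreme j_gt0) => ->; apply/andP; split; lra.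
have t_gt1 : (1 < t)%N by lia.
have [T1_ge T2_ge] := Tpq_ge_oldc t_gt1.
have : `|req j| <= 2 * s ^+ t.-2 by rewrite norm_req ler_pM2l // ler_eXn2l //; lia.
by rewrite ler_norml => /andP[? ?]; apply/andP; split; lra.
Qed.

Lemma inFC_below t P : (0 < t)%N -> inFC a (0 :: reqs t) P -> below (Tpq t) (pq P).
Proof.
move=> t_gt0 [_ /allP covered]; have [T1_in T2_in] := Tpq_extreme_reqs t_gt0.
have := covered _ T1_in; have := covered _ T2_in; rewrite !covers_pq.
by move=> /andP[? _] /andP[_ ?]; split=> //; rewrite -lerN2.
Qed.

Lemma Tpt_inFC t i : (0 < t)%N -> inFC a (0 :: take i (reqs t)) (Tpt a s t).
Proof.
move=> t_gt0; have [T1_ge0 T2_ge0] := Tpq_ge0 t; split.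
  have : 0 <= tau * (Tpt a s t).2 by move: T1_ge0 T2_ge0; rewrite /Tpq /pq /=; lra.
  by rewrite pmulr_rge0 // tau_gt0.
apply/allP => y; rewrite inE covers_pq -/(Tpq t) => /orP[/eqP -> | /mem_take /mapP[j]].
  by apply/andP; split; lra.
by rewrite mem_iota add1n ltnS => jt ->; apply: Tpq_covers.
Qed.

Definition jump_path (t : nat) : nat -> R * R := fun i => if i is 0 then (0, 0) else Tpt a s t.

Lemma jump_path_feasible t : (0 < t)%N -> offline_feasible a (reqs t) (jump_path t).
Proof. by move=> t_gt0; split=> // -[//|i] _; apply: Tpt_inFC. Qed.

Lemma jump_path_cost t : (0 < t)%N -> path_cost (size (reqs t)) (jump_path t) = opt_o a s t.
Proof.
rewrite size_reqs /path_cost; case: t => // t _.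
by rewrite big_ord_recl big1 ?addr0 // => i _; apply: dist_xx.
Qed.

Lemma OPT_le_opt_o t : (0 < t)%N -> OPT a (reqs t) <= opt_o a s t.
Proof.
move=> t_gt0; apply: ge_inf.
  by exists 0 => _ [Q [_ ->]]; apply: sumr_ge0 => i _; apply: dist_ge0.
by exists (jump_path t); rewrite jump_path_cost //; split=> //; apply: jump_path_feasible.
Qed.

Lemma OPT_gt0 t : (0 < t)%N -> 0 < OPT a (reqs t).
Proof.
move=> t_gt0; have tauV_gt0 : 0 < tau^-1 by rewrite invr_gt0 tau_gt0.
apply: (lt_le_trans tauV_gt0); apply: lb_le_inf.
  exists (opt_o a s t), (jump_path t); rewrite jump_path_cost //.
  by split=> //; apply: jump_path_feasible.
move=> _ [Q [[Q0 Q_feas] ->]].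
have : inFC a (0 :: reqs 1) (Q 1%N).
  by rewrite -(take_reqs t_gt0); apply: Q_feas; rewrite size_reqs t_gt0.
move=> /(inFC_below (ltn0Sn 0)); rewrite Tpq1 /pq /below /= => -[? ?].
(* the first step must reach height 1/tau to cover both 0 and X_1 = 2 *)
have y_ge : tau^-1 <= (Q 1%N).2.
  rewrite -[X in _ <= X](mulKf (lt0r_neq0 tau_gt0)) -[X in X <= _]mulr1.
  by rewrite ler_wpM2l ?(ltW tauV_gt0) //; lra.
apply: (le_trans y_ge); rewrite /path_cost size_reqs; case: t t_gt0 {Q_feas} => // t _.
rewrite big_ord_recl /= -[X in X <= _]addr0 lerD //; last first.
  by apply: sumr_ge0 => i _; apply: dist_ge0.
rewrite Q0 /dist /= !sub0r; apply: (le_trans (ler_norm _)).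
by rewrite -sqrtr_sqr ler_wsqrtr // !sqrrN lerDr sqr_ge0.
Qed.

Definition budget (t : nat) : R := rho * (opt_o a s t - opt_o a s t.-1).

Lemma budget_sum j : \sum_(1 <= i < j.+1) budget i = rho * opt_o a s j.
Proof.
rewrite big_add1 succnK /budget -mulr_sumr telescope_sumr //.
by rewrite /opt_o dist_xx subr0.
Qed.

Definition hedge_pt (t : nat) (z : R) : R * R :=
  ((Tpt a s t).1 + z * ((Tpt a s t.+1).1 - (Tpt a s t).1),
   (Tpt a s t).2 + z * ((Tpt a s t.+1).2 - (Tpt a s t).2)).

Lemma newc_pq_hedge_pt t' t z :
  newc t' (pq (hedge_pt t z)) = newc t' (Tpq t) + z * (newc t' (Tpq t.+1) - newc t' (Tpq t)).
Proof. by rewrite /newc /pq /Tpq /hedge_pt; case: odd => /=; ring. Qed.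

Lemma oldc_pq_hedge_pt t' t z :
  oldc t' (pq (hedge_pt t z)) = oldc t' (Tpq t) + z * (oldc t' (Tpq t.+1) - oldc t' (Tpq t)).
Proof. by rewrite /oldc /pq /Tpq /hedge_pt; case: odd => /=; ring. Qed.

Lemma newc_oldc_pq t (U V : R * R) :
  (newc t (pq U) - oldc t (pq U)) * (newc t (pq V) - oldc t (pq V)) = 4 * (U.1 * V.1).
Proof. by rewrite /newc /oldc /pq; case: odd => /=; ring. Qed.

(* Z_(t-1) lies on the line of the halfline of round t-1, not beyond T_t *)
Definition hedge_start t (Zp : R * R) :=
  oldc t (pq Zp) = oldc t (Tpq t) /\ newc t (pq Zp) <= newc t (Tpq t).

Lemma hedge_dist t Zp z : (0 < t)%N -> hedge_start t Zp ->
  dist Zp (hedge_pt t z) = norm_pq tau (newc t (Tpq t) - newc t (pq Zp),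
                                        z * (oldc t (Tpq t.+1) - oldc t (Tpq t))).
Proof.
move=> t_gt0 [Zp_old _].
rewrite distC dist_pq (norm_pq_oriented _ t) newcB oldcB.
rewrite newc_pq_hedge_pt oldc_pq_hedge_pt newc_TpqS // Zp_old.
by rewrite subrr mulr0 addr0 [oldc t (Tpq t) + _]addrC addrK.
Qed.

Lemma hedge_set_uniq t Zp z1 z2 : (0 < t)%N -> hedge_start t Zp ->
  hedge_set a s rho t Zp z1 -> hedge_set a s rho t Zp z2 -> z1 = z2.
Proof.
move=> t_gt0 start [z1_ge0 dist1] [z2_ge0 dist2]; have [_ Zp_new] := start.
have e_gt0 : 0 < oldc t (Tpq t.+1) - oldc t (Tpq t) by rewrite subr_gt0 oldc_Tpq_ltS.
apply: (mulIf (lt0r_neq0 e_gt0)).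
apply: (norm_pq_inj tau_gt0 sqr_tau_le1 (w := newc t (Tpq t) - newc t (pq Zp))).
- by rewrite subr_ge0.
- by rewrite mulr_ge0 // ltW.
- by rewrite mulr_ge0 // ltW.
by rewrite -!hedge_dist // [LHS]dist1 dist2.
Qed.

Lemma hedge_set_nonempty t Zp : (0 < t)%N -> hedge_start t Zp ->
  norm_pq tau (Tpq t - pq Zp) <= budget t -> (hedge_set a s rho t Zp !=set0)%classic.
Proof.
move=> t_gt0 start; have [Zp_old Zp_new] := start.
rewrite (norm_pq_oriented _ t) newcB oldcB Zp_old subrr.
have e_gt0 : 0 < oldc t (Tpq t.+1) - oldc t (Tpq t) by rewrite subr_gt0 oldc_Tpq_ltS.
case/norm_pq_onto; rewrite ?subr_ge0 ?tau_gt0 ?sqr_tau_le1 // => u u_ge0 dist_u.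
exists (u / (oldc t (Tpq t.+1) - oldc t (Tpq t))); split; first exact: divr_ge0 u_ge0 (ltW e_gt0).
by rewrite -/(hedge_pt t _) hedge_dist // mulfVK ?lt0r_neq0.
Qed.

Lemma maxhedgeS_Some t Z : maxhedge a s rho t.+1 = Some Z ->
  exists2 Zp, maxhedge a s rho t = Some Zp &
    (hedge_set a s rho t.+1 Zp !=set0)%classic /\
    Z = hedge_pt t.+1 (sup (hedge_set a s rho t.+1 Zp)).
Proof.
rewrite /=; case: (maxhedge a s rho t) => [Zp|] //.
by case: asboolP => // nonempty [<-]; exists Zp.
Qed.

Lemma maxhedgeS_None t Zp : maxhedge a s rho t = Some Zp -> maxhedge a s rho t.+1 = None ->
  ~ (hedge_set a s rho t.+1 Zp !=set0)%classic.
Proof. by rewrite /= => ->; case: asboolP. Qed.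

(* Z_t lies on the halfline of round t, on the same side of the y-axis as T_t *)
Definition hedge_inv t (Z : R * R) :=
  [/\ newc t (pq Z) = newc t (Tpq t), oldc t (Tpq t) <= oldc t (pq Z) &
      oldc t (pq Z) < newc t (Tpq t)].

Lemma hedge_start_pred t Zp : (0 < t)%N -> maxhedge a s rho t.-1 = Some Zp ->
  ((0 < t.-1)%N -> hedge_inv t.-1 Zp) -> hedge_start t Zp.
Proof.
case: t => [//|[|t]] _.
  by move=> /= [<-] _; rewrite /hedge_start pq0 Tpq1 /oldc /newc /= ler0n.
move=> _ /(_ isT) [Zp_new _ Zp_old]; split; first by rewrite !oldcS Zp_new newc_TpqS.
apply/ltW; rewrite newcS; apply: lt_trans Zp_old _.
by rewrite -newc_TpqS // -oldcS oldc_lt_newc_Tpq.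
Qed.

Section ValidExecution.
Hypothesis valid : maxhedge_valid a s rho.

Lemma maxhedge_inv t Z : (0 < t)%N -> maxhedge a s rho t = Some Z ->
  hedge_inv t Z /\ exists2 Zp, maxhedge a s rho t.-1 = Some Zp & dist Zp Z = budget t.
Proof.
elim: t Z => // t IH Z _ Zt.
have [Zp Zpt [[z0 z0_in] Z_def]] := maxhedgeS_Some Zt.
have start := hedge_start_pred (ltn0Sn t) Zpt (fun t_gt0 => (IH Zp t_gt0 Zpt).1).
have set_z0 : hedge_set a s rho t.+1 Zp = [set z0]%classic.
  apply/seteqP; split=> [z z_in | z ->] //=.
  exact: hedge_set_uniq start z_in z0_in.
rewrite set_z0 sup1 in Z_def; case: z0_in => z0_ge0 z0_dist.
split; last by exists Zp; rewrite // Z_def.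
have Z_new : newc t.+1 (pq Z) = newc t.+1 (Tpq t.+1).
  by rewrite Z_def newc_pq_hedge_pt newc_TpqS // subrr mulr0 addr0.
split=> //.
  by rewrite Z_def oldc_pq_hedge_pt lerDl mulr_ge0 // subr_ge0 ltW // oldc_Tpq_ltS.
(* validity says Z_t and T_t have x-coordinates of the same sign *)
have := newc_oldc_pq t.+1 Z (Tpt a s t.+1); rewrite -/(Tpq t.+1).
move: (valid (ltn0Sn t) Zt) => /(mulr_gt0 (ltr0Sn _ 3)) /[swap] <-.
by rewrite pmulr_lgt0 ?subr_gt0 ?oldc_lt_newc_Tpq // Z_new.
Qed.

Lemma first_failure : maxhedge_fails a s rho ->
  exists k, [/\ (0 < k)%N, maxhedge a s rho k = None &
                forall t, (t < k)%N -> exists Z, maxhedge a s rho t = Some Z].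
Proof.
case=> i fail_i; have ex_fail : exists n, maxhedge a s rho n == None by exists i; rewrite fail_i.
case: (ex_minnP ex_fail) => k /eqP fail_k k_min; exists k; split=> //.
  by case: k fail_k {k_min}.
move=> t tk; case Zt: (maxhedge a s rho t) => [Z|]; first by exists Z.
by have := k_min t; rewrite Zt eqxx leqNgt tk => /(_ isT).
Qed.

Definition Ypq (t : nat) : R * R := if maxhedge a s rho t is Some Z then pq Z else Tpq t.

Section FailingRound.
Variable k : nat.
Hypothesis k_gt0 : (0 < k)%N.
Hypothesis fail_k : maxhedge a s rho k = None.
Hypothesis before_k : forall t, (t < k)%N -> exists Z, maxhedge a s rho t = Some Z.

Lemma Ypq_k : Ypq k = Tpq k. Proof. by rewrite /Ypq fail_k. Qed.

Lemma Ypq_inv t : (0 < t < k)%N -> exists2 Z, Ypq t = pq Z & hedge_inv t Z.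
Proof.
case/andP=> t_gt0 tk; have [Z Zt] := before_k tk.
by exists Z; [rewrite /Ypq Zt | case: (maxhedge_inv t_gt0 Zt)].
Qed.

Lemma Ypq_newc t : (0 < t <= k)%N -> newc t (Ypq t) = newc t (Tpq t).
Proof.
case/andP=> t_gt0; rewrite leq_eqVlt => /orP[/eqP -> | tk]; first by rewrite Ypq_k.
by have [Z -> []] := Ypq_inv (introT andP (conj t_gt0 tk)).
Qed.

Lemma Ypq_oldc t : (0 < t <= k)%N -> oldc t (Tpq t) <= oldc t (Ypq t) < newc t (Tpq t).
Proof.
case/andP=> t_gt0; rewrite leq_eqVlt => /orP[/eqP -> | tk].
  by rewrite Ypq_k lexx oldc_lt_newc_Tpq.
by have [Z -> [_ -> ->]] := Ypq_inv (introT andP (conj t_gt0 tk)).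
Qed.

Lemma Ypq_step t : (0 < t < k)%N -> norm_pq tau (Ypq t - Ypq t.-1) = budget t.
Proof.
case/andP=> t_gt0 tk; have [Z Zt] := before_k tk.
have [_ [Zp Zpt dist_Zp]] := maxhedge_inv t_gt0 Zt.
by rewrite /Ypq Zt Zpt -dist_pq distC.
Qed.

Lemma Ypq_fail : budget k < norm_pq tau (Ypq k - Ypq k.-1).
Proof.
have [Zp Zpt] : exists Zp, maxhedge a s rho k.-1 = Some Zp.
  by apply: before_k; rewrite ltn_predL.
have start := hedge_start_pred k_gt0 Zpt (fun k1_gt0 => (maxhedge_inv k1_gt0 Zpt).1).
rewrite Ypq_k /Ypq Zpt ltNge; apply/negP => within.
apply: (maxhedgeS_None Zpt); rewrite prednK //.
exact: hedge_set_nonempty.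
Qed.

End FailingRound.

Lemma maxhedge_failure_no_path (P : nat -> R * R) : maxhedge_fails a s rho ->
  P 0%N = (0, 0) -> (forall j, (0 < j)%N -> inFC a (0 :: reqs j) (P j)) ->
  ~ (forall j, (0 < j)%N -> \sum_(1 <= i < j.+1) dist (P i.-1) (P i) <= rho * opt_o a s j).
Proof.
case/first_failure=> k [k_gt0 fail_k before_k] P0 P_feas within_budget.
apply: (@no_path_within_budget _ _ tau_gt0 sqr_tau_le1 k Tpq Ypq budget k_gt0
         _ _ _ _ _ _ _ _ (pq \o P)).
- by rewrite /Ypq /= pq0.
- exact: Ypq_newc.
- exact: Ypq_oldc.
- exact: Ypq_k.
- exact: newc_TpqS.
- exact: oldc_Tpq1.
- exact: Ypq_step.
- exact: Ypq_fail.
- by rewrite /= P0 pq0.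
- by move=> j /andP[j_gt0 _]; apply: inFC_below j_gt0 (P_feas j j_gt0).
move=> j /andP[j_gt0 _]; rewrite budget_sum.
under eq_bigr => i _ do rewrite /= -dist_pq distC.
exact: within_budget.
Qed.

End ValidExecution.

Definition alg_path (A : seq R -> R * R) (i : nat) : R * R :=
  if i is 0 then (0, 0) else A (reqs i).

Lemma alg_cost_reqs A j :
  alg_cost A (reqs j) = \sum_(1 <= i < j.+1) dist (alg_path A i.-1) (alg_path A i).
Proof.
rewrite /alg_cost /path_cost size_reqs big_add1 succnK big_mkord.
apply: eq_bigr => -[i ij] _ /=; rewrite /alg_pos /alg_path (take_reqs ij).
by case: i ij => [|i] ij //; rewrite take_reqs // ltnW.
Qed.

Lemma alg_cost_le_ratio A j : 0 < rho -> (comp_ratio a A <= rho%:E)%E -> (0 < j)%N ->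
  alg_cost A (reqs j) <= rho * opt_o a s j.
Proof.
move=> rho_gt0 ratio_le j_gt0; have OPT_pos := OPT_gt0 j_gt0.
have : ((alg_cost A (reqs j) / OPT a (reqs j))%:E <= comp_ratio a A)%E.
  by apply: ereal_sup_ubound; exists (reqs j).
move/le_trans/(_ ratio_le); rewrite lee_fin ler_pdivrMr // => le_rho_OPT.
by apply: le_trans le_rho_OPT _; rewrite ler_wpM2l ?OPT_le_opt_o // ltW.
Qed.

End Drone.

Theorem lemma14 (R : realType) (a s rho : R) :
  0 < a -> a <= pi / 4 -> 1 < s -> 0 < rho ->
  maxhedge_valid a s rho -> maxhedge_fails a s rho ->
  forall A : seq R -> R * R, online_alg a A ->
    (rho%:E < comp_ratio a A)%E.
Proof.
move=> a_gt0 a_le_pi4 s_gt1 rho_gt0 valid fails A onlineA.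
rewrite ltNge; apply/negP => ratio_le.
apply: (maxhedge_failure_no_path a_gt0 a_le_pi4 s_gt1 valid fails (P := alg_path s A)) => //.
  move=> [//|j] _; apply: onlineA.
  by rewrite -size_eq0 size_reqs.
by move=> j j_gt0; rewrite -alg_cost_reqs alg_cost_le_ratio.
Qed.
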